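(* Consider online non-preemptive scheduling of jobs on $k\ge1$ identical machines, where each job $j$ has a release time $r_j$ and a processing time $p_j$ known at release, and the flow time of a job is its completion time minus its release time. Let FIFO be the algorithm that, whenever some machine is idle and some released job is not yet started, starts the released unstarted job with the earliest release time on an idle machine. Let $P$ be the maximum processing time of all jobs and $D\ge0$. If for any two time points $a\le b$ the total processing time of jobs released in $[a,b]$ is at most $k(b-a)+D$, then the maximum flow time achieved by FIFO is at most $\frac{D}{k}+\frac{2(k-1)P}{k}$. *)

From HB Require Import structures.
From mathcomp Require Import all_boot all_order all_algebra.
Set Implicit Arguments. Unset Strict Implicit. Unset Printing Implicit Defensive.
Import Order.TTheory GRing.Theory Num.Theory.
Local Open Scope ring_scope.

Section Sched.
Variables (R : realFieldType) (k n : nat).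
Variables (r p : 'I_n -> R).
Variables (S : 'I_n -> R) (mach : 'I_n -> 'I_k).

Definition busy (m : 'I_k) (t : R) : Prop :=
  exists i : 'I_n, mach i = m /\ S i <= t /\ t < S i + p i.

(* A (non-preemptive) schedule produced by FIFO, with arbitrary tie-breaking
   and arbitrary choice among idle machines:
   - no job starts before its release;
   - jobs assigned to the same machine do not overlap;
   - whenever a released job is still unstarted at time t, no machine is idle at t;
   - when a job j is started, every released job with strictly earlier release
     time has already been started (possibly at the same instant). *)
Definition fifo_schedule : Prop :=
  [/\ (forall j, r j <= S j),
      (forall i j, i != j -> mach i = mach j ->
                   S i + p i <= S j \/ S j + p j <= S i),
      (forall j t, r j <= t -> t < S j -> forall m : 'I_k, busy m t)
    & (forall i j, r i <= S j -> r i < r j -> S i <= S j)].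

End Sched.

(* maximum processing time of all jobs (0 if there are no jobs) *)
Definition maxp (R : realFieldType) (n : nat) (p : 'I_n -> R) : R :=
  \big[Num.max/0]_(j < n) p j.

Definition released_work (R : realFieldType) (n : nat) (r p : 'I_n -> R) (a b : R) : R :=
  \sum_(j < n | (a <= r j) && (r j <= b)) p j.

From HB Require Import structures.
From mathcomp Require Import all_boot all_order all_algebra.
From mathcomp Require Import lra.
From Stdlib Require Import Classical_Prop.

Set Implicit Arguments.
Unset Strict Implicit.
Import Order.TTheory GRing.Theory Num.Theory.
Local Open Scope ring_scope.

(* Fix a job j and let ts be the earliest release or start time with ts <= r_j
   such that all k machines are busy throughout [ts, S_j).  Some machine runs no
   job started before ts, since otherwise the latest start among the k jobs
   running across ts would be an earlier such time; hence at most k - 1 jobs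
   started before ts still run after it, contributing at most (k - 1) P to the
   work done in [ts, S_j).  Every other job processed there starts in
   [ts, S_j), so by FIFO and the minimality of ts it is released in [ts, r_j],
   and it is not j.  Counting the k (S_j - ts) units of work done in [ts, S_j)
   gives k (S_j - ts) <= (k - 1) P + k (r_j - ts) + D - p_j, i.e.
   k (S_j - r_j) <= (k - 1) P + D - p_j, and p_j <= P yields the bound. *)

Lemma exists_min_seq d (T : orderType d) (s : seq T) (P : T -> Prop) :
  (exists2 x, x \in s & P x) ->
  exists2 x, (x \in s) /\ P x & forall y, y \in s -> P y -> (x <= y)%O.
Proof.
elim: s => [[] //|a s IH] [x xs Px].
have [/IH [m [ms Pm] m_min]|none_in_s] := classic (exists2 x, x \in s & P x).
  have [[Pa le_am]|] := classic (P a /\ (a <= m)%O).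
    exists a => [|y]; first by rewrite inE eqxx.
    by rewrite inE => /predU1P [->|/m_min m_y /m_y] //; exact: le_trans.
  move=> not_a_min; exists m => [|y]; first by rewrite inE ms orbT.
  rewrite inE => /predU1P [-> Pa|/m_min //].
  by have [//|/ltW le_am] := leP m a; case: not_a_min.
have Pa : P a.
  by move: xs; rewrite inE => /predU1P [<- //|xs]; case: none_in_s; exists x.
exists a => [|y]; first by rewrite inE eqxx.
by rewrite inE => /predU1P [-> //|ys Py]; case: none_in_s; exists y.
Qed.

Section Overlap.
Variable R : realFieldType.
Implicit Types s e x y : R.

Definition overlap s e x y : R := Num.max 0 (Num.min e y - Num.max s x).

Lemma overlap_ge0 s e x y : 0 <= overlap s e x y.
Proof. by rewrite /overlap le_max lexx. Qed.

Lemma overlap_le_length s e x y : s <= e -> overlap s e x y <= e - s.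
Proof.
move=> le_se; rewrite /overlap ge_max subr_ge0 le_se /=.
by apply: lerB; [rewrite ge_min lexx | rewrite le_max lexx].
Qed.

Lemma overlap_eq0 s e x y : (e <= x) || (y <= s) -> overlap s e x y = 0.
Proof.
move=> disj; apply/eqP; rewrite eq_le overlap_ge0 andbT /overlap ge_max lexx.
rewrite subr_le0 ge_min !le_max.
by case/orP: disj => ->; rewrite ?orbT.
Qed.

Lemma overlap_ge_from_start s e x y : s <= x -> Num.min e y - x <= overlap s e x y.
Proof. by move=> le_sx; rewrite /overlap le_max (max_idPr le_sx) lexx orbT. Qed.

Lemma overlap_antimono s e x x' y : x <= x' -> overlap s e x' y <= overlap s e x y.
Proof.
move=> le_xx'; apply: le_max2 => //; apply: lerB => //.
by rewrite ge_max !le_max lexx /= le_xx' orbT.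
Qed.

Lemma sum_overlap_cover (I : finType) (A : {set I}) (s e : I -> R) x y :
  (forall t, x <= t -> t < y -> exists2 i, i \in A & s i <= t < e i) ->
  y - x <= \sum_(i in A) overlap (s i) (e i) x y.
Proof.
have [N] := ubnP #|A|; elim: N => // N IH in A x y * => A_N cover.
have [le_yx|lt_xy] := lerP y x.
  by apply: le_trans (sumr_ge0 _ (fun i _ => overlap_ge0 _ _ _ _)); rewrite subr_le0.
have [i Ai /andP [le_six lt_xei]] := cover x (lexx x) lt_xy.
have A'_N : (#|A :\ i| < N)%N by move: A_N; rewrite (cardsD1 i) Ai.
set z := Num.min (e i) y.
have le_xz : x <= z by rewrite le_min !ltW.
have cover' t : z <= t -> t < y -> exists2 l, l \in A :\ i & s l <= t < e l.
  move=> le_zt lt_ty; have le_eit : e i <= t.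
    by move: le_zt; rewrite ge_min (leNgt y) lt_ty orbF.
  have [l Al cover_t] := cover t (le_trans le_xz le_zt) lt_ty.
  exists l => //; rewrite !inE Al andbT.
  by apply: contraTneq cover_t => ->; rewrite ltNge le_eit andbF.
have := IH (A :\ i) z y A'_N cover'.
have : z - x <= overlap (s i) (e i) x y := overlap_ge_from_start (e i) y le_six.
have : \sum_(l in A :\ i) overlap (s l) (e l) z y <=
       \sum_(l in A :\ i) overlap (s l) (e l) x y.
  by apply: ler_sum => l _; exact: overlap_antimono.
rewrite (big_setD1 i Ai) /=; lra.
Qed.

End Overlap.

Section FifoSchedule.
Variables (R : realFieldType) (k n : nat) (r p S : 'I_n -> R) (mach : 'I_n -> 'I_k).
Hypothesis p_ge0 : forall i, 0 <= p i.
Hypothesis fifo : fifo_schedule r p S mach.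

Definition busy_on (a b : R) : Prop :=
  forall t, a <= t -> t < b -> forall m, busy p S mach m t.

Definition work_in (a b : R) (i : 'I_n) : R := overlap (S i) (S i + p i) a b.

Lemma busy_on_cat a b c : busy_on a b -> busy_on b c -> busy_on a c.
Proof.
move=> busy_ab busy_bc t le_at lt_tc.
by have [lt_tb|le_bt] := ltP t b; [exact: busy_ab | exact: busy_bc].
Qed.

Lemma work_in_le a b i : work_in a b i <= p i.
Proof.
have le_start_end : S i <= S i + p i by rewrite lerDl.
by apply: le_trans (overlap_le_length a b le_start_end) _; rewrite addrC addKr.
Qed.

Lemma busy_on_work a b : busy_on a b -> k%:R * (b - a) <= \sum_i work_in a b i.
Proof.
move=> busy_ab; rewrite (partition_big mach xpredT) // mulr_natl.
rewrite -[in X in _ *+ X](card_ord k) -sumr_const; apply: ler_sum => m _.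
rewrite -big_set; apply: sum_overlap_cover => t le_at lt_tb.
have [i [mach_i [le_St lt_t_end]]] := busy_ab t le_at lt_tb m.
by exists i; [rewrite inE mach_i; exact: eqxx | apply/andP].
Qed.

Lemma card_running_le t m0 :
    (forall i, mach i = m0 -> S i < t -> S i + p i <= t) ->
  (#|[set i | (S i < t < S i + p i)%R]| <= k.-1)%N.
Proof.
have [_ no_overlap _ _] := fifo; move=> free_m0.
rewrite -(card_in_imset (f := mach)); last first.
  move=> i i'; rewrite !inE => /andP [lt_Si lt_ei] /andP [lt_Si' lt_ei'] same_mach.
  apply/eqP; apply: contraT => neq_ii'.
  by case: (no_overlap i i' neq_ii' same_mach); lra.
rewrite -[k in k.-1]card_ord -(cardsC1 m0); apply/subset_leq_card/subsetP => m /imsetP [i].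
rewrite !inE => /andP [lt_St lt_t_end] ->; apply/eqP => /free_m0 /(_ lt_St).
by rewrite leNgt lt_t_end.
Qed.

Lemma work_started_before_le t b m0 :
    (forall i, mach i = m0 -> S i < t -> S i + p i <= t) ->
  \sum_(i | S i < t) work_in t b i <= k.-1%:R * maxp p.
Proof.
move=> free_m0; pose running := [set i | (S i < t < S i + p i)%R].
apply: le_trans (_ : \sum_(i in running) maxp p <= _); last first.
  rewrite sumr_const -[_ *+ _]mulr_natl ler_wpM2r ?bigmax_ge_id // ler_nat.
  exact: card_running_le free_m0.
rewrite big_mkcond [X in _ <= X]big_mkcond /=; apply: ler_sum => i _.
rewrite inE; case: ltP => //= lt_St.
have [lt_t_end|le_end_t] := ltP t (S i + p i).
  exact: le_trans (work_in_le _ _ _) (le_bigmax _ _ _).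
by rewrite /work_in overlap_eq0 ?le_end_t.
Qed.

Lemma exists_busy_period_start j : exists ts, [/\ ts <= r j, busy_on ts (S j) &
  forall c, c \in codom r ++ codom S -> c < ts -> ~ busy_on c (S j)].
Proof.
have [_ _ busy_until_start _] := fifo.
have [|ts [_ [ts_le_r busy_ts]] ts_min] :=
  @exists_min_seq _ _ (codom r ++ codom S) (fun c => c <= r j /\ busy_on c (S j)).
  by exists (r j); rewrite ?mem_cat ?codom_f //; split; [exact: lexx | exact: busy_until_start].
exists ts; split=> // c c_cand lt_c_ts busy_c.
by have := ts_min c c_cand (conj (le_trans (ltW lt_c_ts) ts_le_r) busy_c); rewrite leNgt lt_c_ts.
Qed.

Section BusyPeriod.
Variables (j : 'I_n) (ts : R).
Hypotheses (ts_le_r : ts <= r j) (busy_ts : busy_on ts (S j)).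
Hypothesis ts_min : forall c, c \in codom r ++ codom S -> c < ts -> ~ busy_on c (S j).

Lemma release_in_busy_period i : ts <= S i -> S i < S j -> ts <= r i <= r j.
Proof.
have [release_le_start _ busy_until_start fifo_order] := fifo.
move=> le_ts_Si lt_SiSj; have le_rirj : r i <= r j.
  rewrite leNgt; apply/negP => lt_rjri.
  have := fifo_order j i (le_trans (ltW lt_rjri) (release_le_start i)) lt_rjri.
  by rewrite leNgt lt_SiSj.
rewrite le_rirj andbT leNgt; apply/negP => lt_ri_ts.
have r_cand : r i \in codom r ++ codom S by rewrite mem_cat codom_f.
apply: (ts_min r_cand lt_ri_ts).
apply: busy_on_cat busy_ts => t le_rit lt_tts.
exact: busy_until_start le_rit (lt_le_trans lt_tts le_ts_Si).
Qed.

Lemma exists_free_machine_at_start : (0 < k)%N ->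
  exists m0, forall i, mach i = m0 -> S i < ts -> S i + p i <= ts.
Proof.
move=> k_gt0; apply: NNPP => no_free.
have running m : exists i, mach i = m /\ S i < ts < S i + p i.
  apply: NNPP => no_running; apply: no_free; exists m => i mach_i lt_Sts.
  by rewrite leNgt; apply/negP => lt_ts_end; apply: no_running; exists i; rewrite mach_i lt_Sts.
have [g running_g] := fin_all_exists running.
have [m1 _ m1_max] := arg_maxP (fun m => S (g m)) (isT : predT (Ordinal k_gt0)).
have [_ /andP [lt_Sts _]] := running_g m1.
have S_cand : S (g m1) \in codom r ++ codom S by rewrite mem_cat codom_f orbT.
apply: (ts_min S_cand lt_Sts).
apply: busy_on_cat busy_ts => t le_t lt_t m.
have [mach_g /andP [_ lt_ts_end]] := running_g m.
exists (g m); split=> //; split; first exact: le_trans (m1_max m isT) le_t.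
exact: lt_trans lt_t lt_ts_end.
Qed.

Lemma work_started_in_busy_period_le :
  \sum_(i | ts <= S i) work_in ts (S j) i <= released_work r p ts (r j) - p j.
Proof.
rewrite /released_work [X in _ <= X - _](bigD1 j) /= ?ts_le_r ?lexx // addrAC subrr add0r.
rewrite big_mkcond [X in _ <= X]big_mkcond /=; apply: ler_sum => i _.
have rhs_ge0 : 0 <= (if (ts <= r i <= r j) && (i != j) then p i else 0).
  by case: ifP.
have [le_ts_Si|_] := leP ts (S i); last exact: rhs_ge0.
have [lt_SiSj|le_SjSi] := ltP (S i) (S j).
  have /andP [-> ->] := release_in_busy_period le_ts_Si lt_SiSj.
  have -> : i != j by apply: contraTneq lt_SiSj => ->; rewrite ltxx.
  exact: work_in_le.
by rewrite /work_in overlap_eq0 ?le_SjSi ?orbT.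
Qed.

End BusyPeriod.

Lemma start_delay_le j D : (0 < k)%N ->
    (forall a b, a <= b -> released_work r p a b <= k%:R * (b - a) + D) ->
  k%:R * (S j - r j) <= (k%:R - 1) * maxp p + D - p j.
Proof.
move=> k_gt0 work_bound.
have [ts [ts_le_r busy_ts ts_min]] := exists_busy_period_start j.
have [m0 free_m0] := exists_free_machine_at_start busy_ts ts_min k_gt0.
have split_work : \sum_i work_in ts (S j) i =
    \sum_(i | S i < ts) work_in ts (S j) i + \sum_(i | ts <= S i) work_in ts (S j) i.
  by rewrite (bigID (fun i => S i < ts)) /=; congr (_ + _); apply: eq_bigl => i; rewrite -leNgt.
have := busy_on_work busy_ts; rewrite split_work.
have := work_started_before_le (S j) free_m0.
have := work_started_in_busy_period_le ts_le_r busy_ts ts_min.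
have := work_bound ts (r j) ts_le_r.
rewrite -subn1 natrB // !mulrBr; lra.
Qed.

End FifoSchedule.

Theorem lemma4p6 (R : realFieldType) (k n : nat) (r p S : 'I_n -> R)
    (mach : 'I_n -> 'I_k) (D : R) :
  (1 <= k)%N ->
  (forall j, 0 < p j) ->
  0 <= D ->
  (forall a b : R, a <= b -> released_work r p a b <= k%:R * (b - a) + D) ->
  fifo_schedule r p S mach ->
  forall j : 'I_n,
    S j + p j - r j <= D / k%:R + 2%:R * (k%:R - 1) * maxp p / k%:R.
Proof.
move=> k_gt0 p_gt0 _ work_bound fifo j.
have p_ge0 i : 0 <= p i := ltW (p_gt0 i).
have delay := start_delay_le p_ge0 fifo j k_gt0 work_bound.
have le_pj_maxp : p j <= maxp p := le_bigmax _ _ _.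
have k_ge1 : 1 <= k%:R :> R by rewrite ler1n.
rewrite -mulrDl ler_pdivlMr ?(lt_le_trans ltr01) //; nra.
Qed.
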